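(* Let $a,b\in\mathbb{C}$ and let $q$ be a nonzero number with $\lvert q\rvert\ne1$. (1) If $0<\lvert q\rvert<1$, then for all $z$ in a neighborhood of $0$, $$\mathrm{E}_q(a,b;z)=\prod_{k=0}^\infty\frac{1+b(1-q)q^kz}{1-a(1-q)q^kz}=\frac{\mathrm{E}_{1/q}(bz)}{\mathrm{E}_{1/q}(-az)},$$ where $\mathrm{E}_{1/q}(z)=\sum_{n=0}^\infty q^{\binom n2}\frac{z^n}{[n]_q!}=\prod_{n=0}^\infty\big(1+(1-q)q^nz\big)$. (2) If $\lvert q\rvert>1$, then for all $z$ in a neighborhood of $0$, $$\mathrm{E}_q(a,b;z)=\prod_{k=0}^\infty\frac{1-a(q^{-1}-1)q^{-k}z}{1+b(q^{-1}-1)q^{-k}z}.$$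
   Context: $[n]_q=\frac{1-q^n}{1-q}$, $[0]_q!=1$, $[n]_q!=\prod_{k=1}^n[k]_q$. $(a\oplus b)^0_{1,q}=1$, $(a\oplus b)^n_{1,q}=\prod_{i=0}^{n-1}(a+bq^i)$. $\mathrm{E}_q(a,b;z)=\sum_{n=0}^\infty(a\oplus b)^n_{1,q}\frac{z^n}{[n]_q!}$ (this is the $(1,u)$-deformed $(s,t)$-exponential with $(s,t)=(1+q,-q)$ and $u=q$). *)

From HB Require Import structures.
From mathcomp Require Import all_boot all_order all_algebra.
From mathcomp Require Import complex.
From mathcomp Require Import all_classical all_reals all_analysis.
Set Implicit Arguments. Unset Strict Implicit. Unset Printing Implicit Defensive.
Import Order.TTheory GRing.Theory Num.Theory.
Import numFieldTopology.Exports numFieldNormedType.Exports.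
Local Open Scope ring_scope.
Local Open Scope complex_scope.
Local Open Scope classical_set_scope.

(* Topology/norm on the complex numbers R[i] (not provided by the library):
   the canonical numFieldType one, |z - w| metric. *)
HB.instance Definition _ (R : rcfType) := PseudoPointedMetric.copy R[i] R[i]^o.
HB.instance Definition _ (R : rcfType) := NormedModule.copy R[i] R[i]^o.

Section QDefs.
Variable R : realType.
Local Notation C := R[i].

Definition qint (q : C) (n : nat) : C := (1 - q ^+ n) / (1 - q).

Definition qfact (q : C) (n : nat) : C := \prod_(k < n) qint q k.+1.

Definition qbinpow (a b q : C) (n : nat) : C := \prod_(i < n) (a + b * q ^+ i).

Definition Eq_partial (a b q z : C) (N : nat) : C :=
  \sum_(n < N) qbinpow a b q n * z ^+ n / qfact q n.

Definition Eq (a b q z : C) : C := lim (Eq_partial a b q z @ \oo).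

(* partial sums of E_{1/q}(z) = sum_n q^{binom n 2} z^n / [n]_q! *)
Definition Einv_partial (q z : C) (N : nat) : C :=
  \sum_(n < N) q ^+ 'C(n, 2) * z ^+ n / qfact q n.

Definition Einv (q z : C) : C := lim (Einv_partial q z @ \oo).

Definition pprod (f : nat -> C) (N : nat) : C := \prod_(k < N) f k.

End QDefs.

From HB Require Import structures.
From mathcomp Require Import all_boot all_order all_algebra.
From mathcomp Require Import complex.
From mathcomp Require Import all_classical all_reals all_analysis.
From mathcomp Require Import ring lra.
Import Order.TTheory GRing.Theory Num.Theory.
Import numFieldTopology.Exports numFieldNormedType.Exports.
Local Open Scope ring_scope.
Local Open Scope complex_scope.
Local Open Scope classical_set_scope.

(** For [|q| < 1] the coefficients of [E_q(a,b;z)] grow at most geometrically,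
    so the series converges near [0] and [E(y) -> 1] as [y -> 0]. Comparing
    coefficients gives the q-difference equation
    [E(z) (1 - a(1-q)z) = E(qz) (1 + b(1-q)z)]; iterated along [z, qz, q^2 z, ...]
    it telescopes the partial products to [E(z) / E(q^N z)], and [E(q^N z) -> 1].
    For [a = 0] the same equation, read backwards, spreads convergence of
    [E_{1/q} = E(0,1)] from a disc to the whole plane, and dividing the products
    for [E_{1/q}(bz)] and [E_{1/q}(-az)] gives the quotient formula. For [|q| > 1]
    the identities [(a (+) b)^n_q = q^(n choose 2) (b (+) a)^n_{1/q}] and
    [[n]_q! = q^(n choose 2) [n]_{1/q}!] turn [E_q(a,b)] into [E_{1/q}(b,a)],
    which reduces to the first case. *)

Section ComplexNorm.
Context {R : realType}.
Local Notation C := R[i].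
(* The real-valued modulus: [`|x|] lives in [C], which is not totally ordered,
   so estimates are carried out on [nc x] where [lra]/[nra] apply. *)
Local Notation nc := (@Normc.normc R).

Lemma normcE (x : C) : `|x| = (nc x)%:C.
Proof. by rewrite normc_def; case: x. Qed.

Lemma normc_ge0 (x : C) : 0 <= nc x.
Proof. by case: x => x y; rewrite /Normc.normc sqrtr_ge0. Qed.

Lemma normcX (x : C) n : nc (x ^+ n) = nc x ^+ n.
Proof.
by elim: n => [|n IHn]; rewrite ?Normc.normc1 // !exprS Normc.normcM IHn.
Qed.

Lemma normcB (x y : C) : nc (x - y) <= nc x + nc y.
Proof. by rewrite -(normcN y) le_normcD. Qed.

Lemma lerB_normc (x y : C) : nc x - nc y <= nc (x - y).
Proof. by have := le_normcD (x - y) y; rewrite subrK; lra. Qed.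

Lemma normc_Re (x : C) : `|complex.Re x| <= nc x.
Proof.
case: x => x y; rewrite /Normc.normc -sqrtr_sqr /=.
by apply: ler_wsqrtr; rewrite lerDl sqr_ge0.
Qed.

Lemma normc_Im (x : C) : `|complex.Im x| <= nc x.
Proof.
case: x => x y; rewrite /Normc.normc -sqrtr_sqr /=.
by apply: ler_wsqrtr; rewrite lerDr sqr_ge0.
Qed.

Lemma normc_le_ReIm (x : C) : nc x <= `|complex.Re x| + `|complex.Im x|.
Proof.
case: x => x y; rewrite /Normc.normc /=.
rewrite -[X in _ <= X]ger0_norm ?addr_ge0 // -sqrtr_sqr; apply: ler_wsqrtr.
rewrite sqrrD -[x ^+ 2]real_normK ?num_real // -[y ^+ 2]real_normK ?num_real //.
have : 0 <= `|x| * `|y| *+ 2 by rewrite mulrn_wge0 ?mulr_ge0.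
lra.
Qed.

Lemma cvg_normcP {T} (F : set_system T) {FF : Filter F} (f : T -> C) (l : C) :
  f @ F --> l <-> forall e : R, 0 < e -> \forall t \near F, nc (l - f t) < e.
Proof.
rewrite (@cvgrPdist_lt C C); split => f_l e e_gt0.
  move: (f_l e%:C); rewrite ltcR => /(_ e_gt0).
  by apply: filterS => t; rewrite normcE ltcR.
have [-> Re_gt0] : e = (complex.Re e)%:C /\ 0 < complex.Re e.
  by move: e_gt0; case: e => x y; rewrite ltcE /= => /andP[/eqP -> x_gt0].
by apply: filterS (f_l _ Re_gt0) => t; rewrite normcE ltcR.
Qed.

Lemma cvg_ReIm {T} {F : set_system T} {FF : Filter F} {f : T -> C} {x y : R} :
  (fun t => complex.Re (f t)) @ F --> x -> (fun t => complex.Im (f t)) @ F --> y ->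
  f @ F --> x +i* y.
Proof.
move=> /(@cvgrPdist_lt R R) Re_x /(@cvgrPdist_lt R R) Im_y.
apply/cvg_normcP => e e_gt0; have e2_gt0 : 0 < e / 2 by rewrite divr_gt0.
near=> t; apply: le_lt_trans (normc_le_ReIm _) _.
have : `|x - complex.Re (f t)| < e / 2 by near: t; exact: Re_x.
have : `|y - complex.Im (f t)| < e / 2 by near: t; exact: Im_y.
by case: (f t) => u v /=; lra.
Unshelve. all: by end_near.
Qed.

Lemma normc_lim_le (f : nat -> C) (l x : C) (r : R) : f @ \oo --> l ->
  (\forall n \near \oo, nc (f n - x) <= r) -> nc (l - x) <= r.
Proof.
move=> /cvg_normcP f_l f_r; apply/ler_addgt0Pr => e /f_l l_e.
near \oo => n.
have : nc (l - f n) < e by near: n.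
have : nc (f n - x) <= r by near: n.
by have := le_normcD (l - f n) (f n - x); rewrite addrA subrK; lra.
Unshelve. all: by end_near.
Qed.

Lemma cvg_sum_dominated (c : nat -> C) (u : R ^nat) :
  (forall n, nc (c n) <= u n) -> cvgn (series u) ->
  cvg ((fun N => \sum_(n < N) c n) @ \oo).
Proof.
move=> c_u u_cvg.
have part_cvg (p : C -> R) : (forall x, `|p x| <= nc x) ->
    (forall N, p (\sum_(n < N) c n) = \sum_(n < N) p (c n)) ->
    cvg ((fun N => p (\sum_(n < N) c n)) @ \oo).
  move=> p_le p_sum; have p_u n : `|p (c n)| <= u n := le_trans (p_le _) (c_u n).
  have /cvg_ex[l p_l] : cvgn (series (p \o c)).
    apply: normed_cvg; apply: series_le_cvg u_cvg => n //=.
    exact: le_trans (normr_ge0 _) (p_u n).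
  apply/cvg_ex; exists l; apply: cvg_trans p_l; apply: near_eq_cvg.
  by near=> N; rewrite p_sum /series /= big_mkord.
have /cvg_ex[x Re_x] := part_cvg _ (@normc_Re)
  (fun N => raddf_sum (@complex.Re R : Rcomplex R -> R) _ _ _).
have /cvg_ex[y Im_y] := part_cvg _ (@normc_Im)
  (fun N => raddf_sum (@complex.Im R : Rcomplex R -> R) _ _ _).
exact: cvgP (cvg_ReIm Re_x Im_y).
Unshelve. all: by end_near.
Qed.

Lemma sum_half_powers_le2 M : \sum_(i < M) (2^-1 : R) ^+ i <= 2.
Proof.
have := subrX1 (2^-1 : R) M; have : 0 <= (2^-1 : R) ^+ M by rewrite exprn_ge0.
lra.
Qed.

Lemma series_geometric_le (c : nat -> C) (s : R) : 0 <= s <= 2^-1 ->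
  (forall n, nc (c n) <= s ^+ n) ->
  cvg ((fun N => \sum_(n < N) c n) @ \oo) /\
  nc (lim ((fun N => \sum_(n < N) c n) @ \oo) - c 0%N) <= 2 * s.
Proof.
move=> /andP[s_ge0 s_le] c_s.
have c_cvg : cvg ((fun N => \sum_(n < N) c n) @ \oo).
  apply: (@cvg_sum_dominated _ (geometric 1 2^-1)); last first.
    by apply: is_cvg_geometric_series; rewrite ger0_norm // invf_lt1 // ltr1n.
  by move=> n; apply: le_trans (c_s n) _; rewrite /= mul1r lerXn2r // nnegrE.
split => //; apply: normc_lim_le c_cvg _; near=> N.
have [M ->] : exists M, N = M.+1 by exists N.-1; rewrite prednK //; near: N; exists 1%N.
rewrite big_ord_recl [c 0%N + _]addrC addrK.
apply: le_trans (@ler_norm_sum _ (Rcomplex R) _ _ _ _) _.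
apply: le_trans (_ : \sum_(i < M) s * (2^-1) ^+ i <= _).
  apply: ler_sum => i _; apply: le_trans (c_s _) _; rewrite exprS ler_wpM2l //.
  by rewrite lerXn2r // nnegrE.
by rewrite -mulr_sumr mulrC ler_wpM2r // sum_half_powers_le2.
Unshelve. all: by end_near.
Qed.

Lemma qX_mul_near0 (q z : C) (r : R) : nc q < 1 -> 0 < r ->
  \forall k \near \oo, nc (q ^+ k * z) < r.
Proof.
move=> q_lt1 r_gt0.
have /(@cvgrPdist_lt R R) geo : geometric (nc z) (nc q) @ \oo --> 0.
  by apply: cvg_geometric; rewrite ger0_norm ?normc_ge0.
apply: filterS (geo _ r_gt0) => k.
by rewrite /geometric /= sub0r normrN ger0_norm ?mulr_ge0 ?exprn_ge0 ?normc_ge0 //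
  Normc.normcM normcX mulrC.
Qed.

End ComplexNorm.

Lemma cvg_prod_telescope {K : numFieldType} {f u v : nat -> K} :
  (forall k, f k * u k = f k.+1 * v k) -> (forall k, u k != 0) ->
  f @ \oo --> (1 : K) -> (fun N => \prod_(k < N) (v k / u k)) @ \oo --> f 0%N.
Proof.
move=> f_uv u_neq0 f_1.
have prod_f N : \prod_(k < N) (v k / u k) * f N = f 0%N.
  elim: N => [|N IHN]; first by rewrite big_ord0 mul1r.
  rewrite big_ord_recr /= -IHN -mulrA; congr (_ * _).
  by rewrite mulrAC [v N * _]mulrC -f_uv mulfK.
have : (fun N => f 0%N * (f N)^-1) @ \oo --> f 0%N * 1^-1.
  exact: cvgMl_tmp (cvgV (oner_neq0 _) f_1).
rewrite invr1 mulr1; apply: cvg_trans; apply: near_eq_cvg.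
move/(@cvgrPdist_lt K K): f_1 => /(_ 1 ltr01) f_near1; near=> N.
have fN_neq0 : f N != 0.
  apply: contraTneq (_ : `|1 - f N| < 1) => [->|]; first by rewrite subr0 normr1 ltxx.
  by near: N.
by rewrite /= -(prod_f N) mulfK.
Unshelve. all: by end_near.
Qed.

Section QSeries.
Context {R : realType}.
Local Notation C := R[i].
Local Notation nc := (@Normc.normc R).

Definition Eq_coef (a b q : C) n := qbinpow a b q n / qfact q n.

Lemma Eq_partialE (a b q z : C) N :
  Eq_partial a b q z N = \sum_(n < N) Eq_coef a b q n * z ^+ n.
Proof. by apply: eq_bigr => n _; rewrite mulrAC. Qed.

Lemma Eq_coef0 (a b q : C) : Eq_coef a b q 0 = 1.
Proof. by rewrite /Eq_coef /qbinpow /qfact !big_ord0 divr1. Qed.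

Lemma Eq_partial_inv (a b : C) {q : C} : q != 0 -> Eq_partial a b q = Eq_partial b a q^-1.
Proof.
move=> q_neq0; have [->|q_neq1] := eqVneq q 1.
  rewrite invr1; apply/funext => z; apply/funext => N; apply: eq_bigr => n _.
  by congr (_ * _ / _); apply: eq_bigr => i _; rewrite expr1n !mulr1 addrC.
have binE n : q ^+ 'C(n, 2) = \prod_(i < n) q ^+ i.
  by rewrite prodrXr -bin2_sum big_mkord.
have qbinpowE n : qbinpow a b q n = q ^+ 'C(n, 2) * qbinpow b a q^-1 n.
  rewrite /qbinpow binE -big_split; apply: eq_bigr => i _ /=.
  by rewrite mulrDr mulrCA -exprMn mulfV // expr1n mulr1 addrC mulrC.
have qfactE n : qfact q n = q ^+ 'C(n, 2) * qfact q^-1 n.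
  rewrite /qfact binE -big_split; apply: eq_bigr => i _ /=.
  have : q - 1 != 0 by rewrite subr_eq0.
  have : q ^+ i != 0 by rewrite expf_neq0.
  rewrite /qint exprVn exprS => qi_neq0 q1_neq0; field.
  by rewrite q_neq0 qi_neq0 q1_neq0 -oppr_eq0 opprB q1_neq0.
(* Only the unit [q ^+ 'C(n, 2)] is cancelled; [qfact q^-1 n] may vanish, and then
   both sides are [_ / 0 = 0]. *)
apply/funext => z; apply/funext => N; apply: eq_bigr => n _.
by rewrite qbinpowE qfactE invfM mulrACA -mulrA mulrACA divff ?expf_neq0 // mul1r mulrA.
Qed.

Section NotUnity.
Context {a b q : C}.
Hypothesis q_not_unity : forall n, q ^+ n.+1 != 1.

Lemma qfact_neq0 n : qfact q n != 0.
Proof.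
apply/prodf_neq0 => k _; rewrite mulf_neq0 ?invr_eq0 ?subr_eq0 1?eq_sym //.
by have := q_not_unity 0; rewrite expr1.
Qed.

Lemma Eq_coefS n :
  Eq_coef a b q n.+1 * (1 - q ^+ n.+1) = (1 - q) * Eq_coef a b q n * (a + b * q ^+ n).
Proof.
have := qfact_neq0 n; have : 1 - q ^+ n.+1 != 0 by rewrite subr_eq0 eq_sym.
have : 1 - q != 0 by rewrite subr_eq0 eq_sym -[q]expr1.
rewrite /Eq_coef /qbinpow /qfact !big_ord_recr /= /qint => ? ? ?; field.
by apply/and3P.
Qed.

Lemma Eq_partial_qshift z N :
  Eq_partial a b q z N.+1 - Eq_partial a b q (q * z) N.+1 =
  (1 - q) * z * (a * Eq_partial a b q z N + b * Eq_partial a b q (q * z) N).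
Proof.
rewrite !Eq_partialE -sumrB big_ord_recl /= Eq_coef0 !expr0 subrr add0r.
rewrite !mulr_sumr -big_split mulr_sumr; apply: eq_bigr => i _ /=.
rewrite /bump /= add1n.
transitivity (Eq_coef a b q i.+1 * (1 - q ^+ i.+1) * z ^+ i.+1); first by rewrite exprMn; ring.
by rewrite Eq_coefS exprS exprMn; ring.
Qed.

Lemma Eq_qshift z :
  cvg (Eq_partial a b q z @ \oo) -> cvg (Eq_partial a b q (q * z) @ \oo) ->
  Eq a b q z * (1 - a * (1 - q) * z) = Eq a b q (q * z) * (1 + b * (1 - q) * z).
Proof.
move=> /cvg_ex[/= l l_lim] /cvg_ex[/= lq lq_lim].
have -> : Eq a b q z = l by exact: cvg_lim l_lim.
have -> : Eq a b q (q * z) = lq by exact: cvg_lim lq_lim.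
have lhs : (fun N => Eq_partial a b q z N.+1 - Eq_partial a b q (q * z) N.+1)
    @ \oo --> l - lq.
  have l_limS := l_lim; have lq_limS := lq_lim.
  rewrite -cvg_shiftS in l_limS; rewrite -cvg_shiftS in lq_limS.
  exact: cvgB l_limS lq_limS.
have rhs : (fun N => Eq_partial a b q z N.+1 - Eq_partial a b q (q * z) N.+1)
    @ \oo --> (1 - q) * z * (a * l + b * lq).
  rewrite (funext (Eq_partial_qshift z)).
  exact: cvgMl_tmp (cvgD (cvgMl_tmp l_lim) (cvgMl_tmp lq_lim)).
have l_eq : l - lq = (1 - q) * z * (a * l + b * lq) by exact: cvg_unique _ lhs rhs.
apply/eqP; rewrite -subr_eq0; apply/eqP.
by transitivity (l - lq - (1 - q) * z * (a * l + b * lq)); [ring | rewrite l_eq subrr].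
Qed.

End NotUnity.
End QSeries.

Section SmallQ.
Context {R : realType}.
Local Notation C := R[i].
Local Notation nc := (@Normc.normc R).

Lemma not_unity_normc_lt1 {q : C} : nc q < 1 -> forall n, q ^+ n.+1 != 1.
Proof.
move=> q_lt1 n; apply: contraTneq q_lt1 => /(congr1 nc) /eqP.
by rewrite normcX Normc.normc1 pexpr_eq1 ?normc_ge0 // => /eqP ->; rewrite ltxx.
Qed.

(* With [K = 2 (|a| + |b|) / (1 - |q|)] bounding the ratio of consecutive
   coefficients, this radius [rho] makes [K rho <= 1/2] and [|a (1 - q)| rho <= 1/2]. *)
Definition Eq_radius (a b q : C) : R := (1 - nc q) / (4 * (nc a + nc b + 1)).

Context (a b : C) {q : C}.
Hypothesis q_lt1 : nc q < 1.

Let q_not_unity := not_unity_normc_lt1 q_lt1.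
Let K := 2 * (nc a + nc b) / (1 - nc q).

Let normc_1Bq_le2 : nc (1 - q) <= 2.
Proof. by have := normcB 1 q; rewrite Normc.normc1; move: q_lt1; lra. Qed.

Let K_ge0 : 0 <= K.
Proof. by rewrite divr_ge0 ?subr_ge0 ?(ltW q_lt1) ?mulr_ge0 ?addr_ge0 ?normc_ge0. Qed.

Lemma Eq_coef_le n : nc (Eq_coef a b q n) <= K ^+ n.
Proof.
have dq_gt0 : 0 < 1 - nc q by rewrite subr_gt0.
have qX_le1 m : nc q ^+ m <= 1 by rewrite exprn_ile1 ?normc_ge0 // ltW.
elim: n => [|n IHn]; first by rewrite Eq_coef0 Normc.normc1.
have ratio : nc (Eq_coef a b q n.+1) * (1 - nc q) <=
    2 * (nc a + nc b) * nc (Eq_coef a b q n).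
  apply: le_trans (_ : nc (Eq_coef a b q n.+1) * nc (1 - q ^+ n.+1) <= _).
    rewrite ler_wpM2l ?normc_ge0 //.
    have := lerB_normc 1 (q ^+ n.+1); rewrite Normc.normc1 normcX exprS.
    have : nc q * nc q ^+ n <= nc q by rewrite ler_piMr ?normc_ge0.
    lra.
  rewrite -Normc.normcM Eq_coefS // mulrAC Normc.normcM Normc.normcM.
  apply: ler_wpM2r; first exact: normc_ge0.
  apply: ler_pM; rewrite ?normc_ge0 //.
  apply: le_trans (le_normcD _ _) _; rewrite lerD2l Normc.normcM normcX.
  by rewrite ler_piMr ?normc_ge0.
rewrite exprS; apply: le_trans (_ : _ <= K * nc (Eq_coef a b q n)) _.
  by rewrite /K mulrAC ler_pdivlMr.
exact: ler_wpM2l K_ge0 _ _ IHn.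
Qed.

Lemma Eq_radius_gt0 : 0 < Eq_radius a b q.
Proof.
by rewrite divr_gt0 ?subr_gt0 // mulr_gt0 // ltr_wpDl ?addr_ge0 ?normc_ge0.
Qed.

Lemma Eq_near0 y : nc y <= Eq_radius a b q ->
  cvg (Eq_partial a b q y @ \oo) /\ nc (Eq a b q y - 1) <= nc y / Eq_radius a b q.
Proof.
move=> y_le; have rho_gt0 := Eq_radius_gt0; set rho := Eq_radius a b q in y_le rho_gt0 *.
have na := normc_ge0 a; have nb := normc_ge0 b; have ny := normc_ge0 y.
have Krho : K * rho <= 2^-1.
  have -> : K * rho = (nc a + nc b) / (2 * (nc a + nc b + 1)).
    rewrite /K /rho /Eq_radius; field.
    by rewrite !gt_eqF ?subr_gt0 // ltr_wpDl ?addr_ge0.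
  by rewrite ler_pdivrMr ?mulr_gt0 ?ltr_wpDl ?addr_ge0 //; lra.
have s_le : 0 <= K * nc y <= 2^-1.
  by rewrite mulr_ge0 //=; apply: le_trans Krho; apply: ler_wpM2l.
have coef_le n : nc (Eq_coef a b q n * y ^+ n) <= (K * nc y) ^+ n.
  by rewrite Normc.normcM normcX exprMn ler_wpM2r ?exprn_ge0 ?Eq_coef_le.
have [cvg_y lim_y] := series_geometric_le _ _ s_le coef_le.
rewrite Eq_coef0 expr0 mulr1 -(funext (Eq_partialE a b q y)) in cvg_y lim_y.
split => //; apply: le_trans lim_y _.
by rewrite ler_pdivlMr //; nra.
Qed.

Lemma Eq_factor_neq0 y : nc y <= Eq_radius a b q -> 1 - a * (1 - q) * y != 0.
Proof.
move=> y_le; have rho_gt0 := Eq_radius_gt0.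
have na := normc_ge0 a; have nb := normc_ge0 b; have ny := normc_ge0 y.
have rho_le : Eq_radius a b q * (4 * (nc a + nc b + 1)) <= 1.
  rewrite divfK; first by have := normc_ge0 q; lra.
  by rewrite gt_eqF // mulr_gt0 // ltr_wpDl ?addr_ge0.
have : nc (a * (1 - q) * y) < 1.
  rewrite !Normc.normcM.
  have : nc a * nc (1 - q) * nc y <= nc a * 2 * Eq_radius a b q.
    by rewrite -!mulrA ler_wpM2l // ler_pM ?normc_ge0.
  have : 0 <= Eq_radius a b q * (nc b + 1) by rewrite mulr_ge0 ?addr_ge0 // ltW.
  lra.
by apply: contraTneq => /eqP; rewrite subr_eq0 => /eqP <-; rewrite Normc.normc1 ltxx.
Qed.

Lemma Eq_qX_cvg1 z : (fun k => Eq a b q (q ^+ k * z)) @ \oo --> (1 : C).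
Proof.
apply/cvg_normcP => e e_gt0; have rho_gt0 := Eq_radius_gt0.
have min_gt0 : 0 < Num.min (Eq_radius a b q) (e * Eq_radius a b q).
  by rewrite lt_min rho_gt0 mulr_gt0.
apply: filterS (qX_mul_near0 q z _ q_lt1 min_gt0) => k.
rewrite lt_min => /andP[/ltW k_le k_lt]; rewrite -normcN opprB.
by apply: le_lt_trans (Eq_near0 _ k_le).2 _; rewrite ltr_pdivrMr.
Qed.

Lemma Eq_prod z :
  (forall k, cvg (Eq_partial a b q (q ^+ k * z) @ \oo)) ->
  (forall k, 1 - a * (1 - q) * q ^+ k * z != 0) ->
  pprod (fun k => (1 + b * (1 - q) * q ^+ k * z) / (1 - a * (1 - q) * q ^+ k * z))
    @ \oo --> Eq a b q z.
Proof.
move=> Eq_cvg factor_neq0.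
have Eq_qXS k : Eq a b q (q ^+ k * z) * (1 - a * (1 - q) * q ^+ k * z) =
    Eq a b q (q ^+ k.+1 * z) * (1 + b * (1 - q) * q ^+ k * z).
  have qXS : q * (q ^+ k * z) = q ^+ k.+1 * z by rewrite mulrA -exprS.
  have := Eq_qshift q_not_unity _ (Eq_cvg k); rewrite qXS !mulrA; apply.
  exact: Eq_cvg k.+1.
have := cvg_prod_telescope Eq_qXS factor_neq0 (Eq_qX_cvg1 z).
by rewrite expr0 mul1r.
Qed.

Lemma Eq_prod_near0 z : nc z <= Eq_radius a b q ->
  cvg (Eq_partial a b q z @ \oo) /\
  pprod (fun k => (1 + b * (1 - q) * q ^+ k * z) / (1 - a * (1 - q) * q ^+ k * z))
    @ \oo --> Eq a b q z.
Proof.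
move=> z_le; have qXz_le k : nc (q ^+ k * z) <= Eq_radius a b q.
  rewrite Normc.normcM normcX; apply: le_trans z_le.
  by rewrite ler_piMl ?normc_ge0 // exprn_ile1 ?normc_ge0 // ltW.
split; first exact: (Eq_near0 _ z_le).1.
apply: Eq_prod => k; first exact: (Eq_near0 _ (qXz_le k)).1.
by rewrite -mulrA; apply: Eq_factor_neq0.
Qed.

End SmallQ.

Section QProducts.
Context {R : realType}.
Local Notation C := R[i].
Local Notation nc := (@Normc.normc R).

Lemma Einv_partialE (q z : C) : Einv_partial q z = Eq_partial 0 1 q z.
Proof.
apply/funext => N; apply: eq_bigr => n _; congr (_ * _ / _).
rewrite /qbinpow -bin2_sum big_mkord -prodrXr.
by apply: eq_bigr => i _; rewrite add0r mul1r.
Qed.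

Lemma EinvE (q z : C) : Einv q z = Eq 0 1 q z.
Proof. by rewrite /Einv Einv_partialE. Qed.

Lemma Eq0_cvg_qshift (b q z : C) : (forall n, q ^+ n.+1 != 1) ->
  cvg (Eq_partial 0 b q (q * z) @ \oo) -> cvg (Eq_partial 0 b q z @ \oo).
Proof.
move=> q_not_unity /cvg_ex[/= l l_lim]; have l_limS := l_lim.
rewrite -cvg_shiftS in l_limS.
have Eq_partialS N : Eq_partial 0 b q z N.+1 =
    Eq_partial 0 b q (q * z) N.+1 + (1 - q) * z * (b * Eq_partial 0 b q (q * z) N).
  have := Eq_partial_qshift (a := 0) (b := b) q_not_unity z N.
  by rewrite mul0r add0r => <-; rewrite addrC subrK.
have : (fun N => Eq_partial 0 b q z N.+1) @ \oo --> l + (1 - q) * z * (b * l).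
  by rewrite (funext Eq_partialS); exact: cvgD l_limS (cvgMl_tmp (cvgMl_tmp l_lim)).
by rewrite cvg_shiftS => /cvgP.
Qed.

Lemma Eq0_cvg (b q z : C) : nc q < 1 -> cvg (Eq_partial 0 b q z @ \oo).
Proof.
move=> q_lt1; have rho_gt0 := Eq_radius_gt0 0 b q_lt1.
have [m _ /(_ m (leqnn m)) /ltW qXz_le] := qX_mul_near0 q z _ q_lt1 rho_gt0.
elim: m z qXz_le => [|m IHm] z qXz_le.
  by move: qXz_le; rewrite expr0 mul1r => /Eq_near0[].
apply: Eq0_cvg_qshift (not_unity_normc_lt1 q_lt1) _; apply: IHm.
by rewrite mulrA -exprSr.
Qed.

Lemma Einv_prod {q : C} : nc q < 1 -> forall z,
  cvg (Einv_partial q z @ \oo) /\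
  pprod (fun n => 1 + (1 - q) * q ^+ n * z) @ \oo --> Einv q z.
Proof.
move=> q_lt1 z; rewrite Einv_partialE EinvE; split; first exact: Eq0_cvg.
have -> : (fun n => 1 + (1 - q) * q ^+ n * z) =
    (fun k => (1 + 1 * (1 - q) * q ^+ k * z) / (1 - 0 * (1 - q) * q ^+ k * z)).
  by apply/funext => k; rewrite mul1r !mul0r subr0 divr1.
apply: Eq_prod => // k; first exact: Eq0_cvg.
by rewrite !mul0r subr0 oner_neq0.
Qed.

Lemma Eq_Einv_ratio (a b q z : C) : nc q < 1 -> nc (a * z) < Eq_radius 0 1 q ->
  pprod (fun k => (1 + b * (1 - q) * q ^+ k * z) / (1 - a * (1 - q) * q ^+ k * z))
    @ \oo --> Eq a b q z ->
  Eq a b q z = Einv q (b * z) / Einv q (- a * z).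
Proof.
move=> q_lt1 az_lt Eq_lim.
have [_ num_lim] := Einv_prod q_lt1 (b * z).
have [_ den_lim] := Einv_prod q_lt1 (- a * z).
have den_neq0 : Einv q (- a * z) != 0.
  have az_le : nc (- a * z) <= Eq_radius 0 1 q by rewrite mulNr normcN ltW.
  have := (Eq_near0 0 1 q_lt1 _ az_le).2; rewrite -EinvE.
  apply: contraTneq => ->; rewrite sub0r normcN Normc.normc1 -ltNge.
  by rewrite ltr_pdivrMr ?Eq_radius_gt0 // mul1r mulNr normcN.
have : pprod (fun k => (1 + b * (1 - q) * q ^+ k * z) / (1 - a * (1 - q) * q ^+ k * z))
    @ \oo --> Einv q (b * z) / Einv q (- a * z).
  have -> : pprod (fun k => (1 + b * (1 - q) * q ^+ k * z) / (1 - a * (1 - q) * q ^+ k * z)) =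
      (fun N => pprod (fun n => 1 + (1 - q) * q ^+ n * (b * z)) N /
                pprod (fun n => 1 + (1 - q) * q ^+ n * (- a * z)) N).
    apply/funext => N; rewrite /pprod -prodf_div; apply: eq_bigr => k _.
    by congr (_ / _); ring.
  exact: cvgM num_lim (cvgV den_neq0 den_lim).
exact: cvg_unique _ Eq_lim.
Qed.

Lemma Eq_prod_small_q (a b q : C) : nc q < 1 ->
  exists r : R, 0 < r /\ forall z : C, `|z| < r%:C ->
    cvg (Eq_partial a b q z @ \oo) /\
    pprod (fun k => (1 + b * (1 - q) * q ^+ k * z) / (1 - a * (1 - q) * q ^+ k * z))
      @ \oo --> Eq a b q z /\
    Eq a b q z = Einv q (b * z) / Einv q (- a * z).
Proof.
move=> q_lt1; have a1_gt0 : 0 < nc a + 1 by rewrite ltr_wpDl ?normc_ge0.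
exists (Num.min (Eq_radius a b q) (Eq_radius 0 1 q / (nc a + 1))); split.
  by rewrite lt_min Eq_radius_gt0 // divr_gt0 // Eq_radius_gt0.
move=> z; rewrite normcE ltcR lt_min => /andP[/ltW z_le z_lt].
have [z_cvg z_prod] := Eq_prod_near0 a b q_lt1 _ z_le.
do 2!split => //; apply: Eq_Einv_ratio z_prod => //.
rewrite Normc.normcM; apply: le_lt_trans (_ : nc a * nc z <= (nc a + 1) * nc z) _.
  by rewrite ler_wpM2r ?normc_ge0 // lerDl.
by rewrite mulrC -ltr_pdivlMr.
Qed.

Lemma Eq_prod_large_q (a b q : C) : 1 < nc q ->
  exists r : R, 0 < r /\ forall z : C, `|z| < r%:C ->
    cvg (Eq_partial a b q z @ \oo) /\
    pprod (fun k => (1 - a * (q^-1 - 1) * q^-1 ^+ k * z) /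
                    (1 + b * (q^-1 - 1) * q^-1 ^+ k * z)) @ \oo --> Eq a b q z.
Proof.
move=> q_gt1; have q_gt0 : 0 < nc q := lt_trans ltr01 q_gt1.
have q_neq0 : q != 0 by apply: contraTneq q_gt0 => ->; rewrite Normc.normc0 ltxx.
have qV_lt1 : nc q^-1 < 1 by rewrite Normc.normcV invf_lt1.
exists (Eq_radius b a q^-1); split; first exact: Eq_radius_gt0.
move=> z; rewrite normcE ltcR => /ltW z_le.
have -> : Eq a b q z = Eq b a q^-1 z by rewrite /Eq (Eq_partial_inv a b q_neq0).
rewrite (Eq_partial_inv a b q_neq0).
have -> : (fun k => (1 - a * (q^-1 - 1) * q^-1 ^+ k * z) /
                    (1 + b * (q^-1 - 1) * q^-1 ^+ k * z)) =
    (fun k => (1 + a * (1 - q^-1) * q^-1 ^+ k * z) / (1 - b * (1 - q^-1) * q^-1 ^+ k * z)).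
  by apply/funext => k; congr (_ / _); ring.
by have := Eq_prod_near0 b a qV_lt1 _ z_le.
Qed.

End QProducts.

Theorem mainTheorem14 (R : realType) (a b q : R[i])
  (hq0 : q != 0) (hq1 : `|q| != 1) :
  (`|q| < 1 ->
    (forall z : R[i],
       cvg (Einv_partial q z @ \oo) /\
       pprod (fun n => 1 + (1 - q) * q ^+ n * z) @ \oo --> Einv q z) /\
    exists r : R, 0 < r /\
      forall z : R[i], `|z| < r%:C ->
        cvg (Eq_partial a b q z @ \oo) /\
        pprod (fun k => (1 + b * (1 - q) * q ^+ k * z) /
                        (1 - a * (1 - q) * q ^+ k * z)) @ \oo --> Eq a b q z /\
        Eq a b q z = Einv q (b * z) / Einv q (- a * z)) /\
  (1 < `|q| ->
    exists r : R, 0 < r /\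
      forall z : R[i], `|z| < r%:C ->
        cvg (Eq_partial a b q z @ \oo) /\
        pprod (fun k => (1 - a * (q^-1 - 1) * q^-1 ^+ k * z) /
                        (1 + b * (q^-1 - 1) * q^-1 ^+ k * z)) @ \oo --> Eq a b q z).
Proof.
rewrite normcE -[1 : R[i]]/(1%:C) !ltcR.
split => [q_lt1 | q_gt1]; last exact: Eq_prod_large_q.
by split; [exact: Einv_prod | exact: Eq_prod_small_q].
Qed.
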